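(* Let $F \in \mathbb{C}^{n \times n}$ be a unitary matrix and let $y = F\hat{x} + e$, where $\hat{x} \in \mathbb{C}^{n}$ is $k$-sparse and $e \in \mathbb{C}^{n}$. If $\|e\|_{\infty} \leq \eta_1$ and $\|F^*e\|_{\infty} \leq \eta_{2}$, then any solution $x^{\#}$ of the modified Dantzig Selector problem $$\min_{z \in \mathbb{C}^{n}}\|z\|_1 \quad \text{subject to} \quad \|F^*(y - Fz)\|_\infty \leq \eta_2, \quad \|Fz - y\|_\infty \leq \eta_1$$ satisfies $$\| x^{\#}-\hat{x}\|_1 \leq 4k\eta_2 \quad\text{and}\quad \| x^{\#}-\hat{x}\|_2 \leq 6\sqrt{k}\,\eta_2 .$$
   Context: A vector is $k$-sparse if it has at most $k$ nonzero entries. $F^*$ denotes the conjugate transpose of $F$. *)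

(* Complex numbers are modelled by an arbitrary
   numClosedFieldType C (e.g. algC, or R[i] for a real closed field R). *)
From HB Require Import structures.
From mathcomp Require Import all_boot all_order all_algebra.
From mathcomp Require Import sesquilinear spectral.
Set Implicit Arguments. Unset Strict Implicit. Unset Printing Implicit Defensive.
Import Order.TTheory GRing.Theory Num.Theory.
Local Open Scope ring_scope.

Section Norms.
Variables (C : numClosedFieldType) (n : nat).

Definition norm1 (z : 'cV[C]_n) : C := \sum_i `|z i 0|.
Definition norm2 (z : 'cV[C]_n) : C := sqrtC (\sum_i `|z i 0| ^+ 2).
Definition norminf (z : 'cV[C]_n) : C := \big[Num.max/0]_i `|z i 0|.

Definition sparse (k : nat) (z : 'cV[C]_n) : Prop :=
  (#|[set i | z i ord0 != 0%R]| <= k)%N.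

Definition adj (F : 'M[C]_n) : 'M[C]_n := (F ^t*)%sesqui.


Definition mds_feasible (F : 'M[C]_n) (y : 'cV[C]_n) (eta1 eta2 : C)
  (z : 'cV[C]_n) : Prop :=
  norminf (adj F *m (y - F *m z)) <= eta2 /\ norminf (F *m z - y) <= eta1.

Definition mds_solution (F : 'M[C]_n) (y : 'cV[C]_n) (eta1 eta2 : C)
  (x : 'cV[C]_n) : Prop :=
  mds_feasible F y eta1 eta2 x /\
  forall z, mds_feasible F y eta1 eta2 z -> norm1 x <= norm1 z.

End Norms.

(* Since xhat is itself feasible, the minimizer satisfies |xs|_1 <= |xhat|_1,
   so h := xs - xhat lies in the l1 cone |h_{S^c}|_1 <= |h_S|_1 of the support
   S of xhat, whence |h|_1 <= 2 |S| |h|_inf.  Unitarity gives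
   h = F^* F h = F^* (F xs - y) + F^* e, two terms bounded by eta2 entrywise,
   so |h|_inf <= 2 eta2.  This yields the l1 bound, and the l2 bound follows
   from |h|_2^2 <= |h|_1 |h|_inf <= 8 k eta2^2. *)
From HB Require Import structures.
From mathcomp Require Import all_boot all_order all_algebra.
From mathcomp Require Import sesquilinear spectral.
From mathcomp Require Import ring.
Import Order.TTheory GRing.Theory Num.Theory.
Local Open Scope ring_scope.

Section VectorNorms.
Context {C : numClosedFieldType} {n : nat}.
Implicit Types (u v z h x : 'cV[C]_n) (c : C).

Lemma norminf_ge0 z : 0 <= norminf z.
Proof.
rewrite /norminf; elim/big_ind: _ => // a b a0 b0.
by rewrite comparable_le_max ?a0 // real_comparable ?ger0_real.
Qed.

Lemma ler_norminf z i : `|z i 0| <= norminf z.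
Proof.
rewrite /norminf; have : i \in index_enum 'I_n by rewrite mem_index_enum.
elim: (index_enum _) => // j r IHr; rewrite inE big_cons.
have r_real : \big[Num.max/0]_(k <- r) `|z k 0| \is Num.real.
  by apply: bigmax_real => // k _; exact: normr_real.
rewrite comparable_le_max ?real_comparable ?normr_real //.
by case/predU1P => [<-|/IHr->]; rewrite ?lexx ?orbT.
Qed.

Lemma norminf_le z c : 0 <= c -> (forall i, `|z i 0| <= c) -> norminf z <= c.
Proof.
move=> c0 zc; rewrite /norminf.
elim/big_ind: _ => // a b a_c b_c.
have c_real := ger0_real c0.
rewrite comparable_ge_max ?a_c ?b_c //.
by rewrite real_comparable ?(ler_real a_c) ?(ler_real b_c).
Qed.

Lemma norminfN z : norminf (- z) = norminf z.
Proof. by apply: eq_bigr => i _; rewrite mxE normrN. Qed.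

Lemma norminfD u v : norminf (u + v) <= norminf u + norminf v.
Proof.
apply: norminf_le => [|i]; first by rewrite addr_ge0 ?norminf_ge0.
by rewrite mxE (le_trans (ler_normD _ _)) // lerD ?ler_norminf.
Qed.

Lemma norm1_ge0 z : 0 <= norm1 z.
Proof. by rewrite sumr_ge0. Qed.

Lemma norm1_split (S : {set 'I_n}) z :
  norm1 z = \sum_(i in S) `|z i 0| + \sum_(i | i \notin S) `|z i 0|.
Proof. exact: bigID. Qed.

Lemma sum_norm_le_card (S : {set 'I_n}) z :
  \sum_(i in S) `|z i 0| <= #|S|%:R * norminf z.
Proof.
rewrite mulr_natl -sumr_const; apply: ler_sum => i _.
exact: ler_norminf.
Qed.

Lemma norm2_ge0 z : 0 <= norm2 z.
Proof. by rewrite sqrtC_ge0 sumr_ge0 // => i _; rewrite exprn_ge0. Qed.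

Lemma norm2_sqr z : norm2 z ^+ 2 = \sum_i `|z i 0| ^+ 2.
Proof. exact: sqrtCK. Qed.

Lemma norm2_sqr_le z : norm2 z ^+ 2 <= norm1 z * norminf z.
Proof.
rewrite norm2_sqr /norm1 mulr_suml; apply: ler_sum => i _.
by rewrite expr2 ler_wpM2l ?ler_norminf.
Qed.

Lemma l1_cone (S : {set 'I_n}) x h :
  (forall i, i \notin S -> x i 0 = 0) -> norm1 (x + h) <= norm1 x ->
  \sum_(i | i \notin S) `|h i 0| <= \sum_(i in S) `|h i 0|.
Proof.
move=> x_supp le_xh_x.
have norm1_x : norm1 x = \sum_(i in S) `|x i 0|.
  rewrite (norm1_split S) [X in _ + X]big1 ?addr0 // => i /x_supp ->.
  exact: normr0.
have norm1_xh : norm1 (x + h) =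
    \sum_(i in S) `|x i 0 + h i 0| + \sum_(i | i \notin S) `|h i 0|.
  rewrite (norm1_split S); congr (_ + _); apply: eq_bigr => i.
    by rewrite mxE.
  by move/x_supp; rewrite mxE => ->; rewrite add0r.
have : \sum_(i in S) (`|x i 0| - `|h i 0|) + \sum_(i | i \notin S) `|h i 0|
         <= \sum_(i in S) `|x i 0|.
  rewrite -norm1_x (le_trans _ le_xh_x) // norm1_xh lerD2r.
  by apply: ler_sum => i _; exact: lerB_normD.
by rewrite sumrB -addrA gerDl addrC subr_le0.
Qed.

Lemma norm1_le_cone (S : {set 'I_n}) h :
  \sum_(i | i \notin S) `|h i 0| <= \sum_(i in S) `|h i 0| ->
  norm1 h <= 2 * #|S|%:R * norminf h.
Proof.
move=> cone; rewrite (norm1_split S) -mulrA mulr2n mulrDl mul1r.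
by rewrite lerD ?(le_trans cone) ?sum_norm_le_card.
Qed.

End VectorNorms.

Section DantzigSelector.
Context {C : numClosedFieldType} {n : nat} {F : 'M[C]_n}.
Context {xhat e y : 'cV[C]_n} {eta1 eta2 : C}.
Hypothesis y_def : y = F *m xhat + e.

Lemma adj_unitaryK p (A : 'M[C]_(n, p)) :
  F \is unitarymx -> adj F *m (F *m A) = A.
Proof.
by move=> F_unitary; rewrite mulmxA -[adj F]mul1mx mulmxKtV ?mul1mx.
Qed.

Lemma mds_feasible_signal :
  norminf e <= eta1 -> norminf (adj F *m e) <= eta2 ->
  mds_feasible F y eta1 eta2 xhat.
Proof.
move=> e_eta1 Fe_eta2; split; first by rewrite y_def addrAC subrr add0r.
by rewrite y_def opprD addrA subrr add0r norminfN.
Qed.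

Lemma mds_feasible_error_norminf x :
  F \is unitarymx -> norminf (adj F *m e) <= eta2 ->
  mds_feasible F y eta1 eta2 x -> norminf (x - xhat) <= 2 * eta2.
Proof.
move=> F_unitary Fe_eta2 [Fres_eta2 _].
have -> : x - xhat = - (adj F *m (y - F *m x)) + adj F *m e.
  rewrite -mulmxN -mulmxDr opprB y_def -[x - xhat]adj_unitaryK //.
  by congr (_ *m _); rewrite mulmxBr opprD addrA subrK.
by rewrite mulr2n mulrDl mul1r (le_trans (norminfD _ _)) // norminfN lerD.
Qed.

End DantzigSelector.

Theorem theorem4 (C : numClosedFieldType) (n k : nat) (F : 'M[C]_n)
  (xhat e y xs : 'cV[C]_n) (eta1 eta2 : C) :
  F \is unitarymx ->
  sparse k xhat ->
  y = F *m xhat + e ->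
  norminf e <= eta1 ->
  norminf (adj F *m e) <= eta2 ->
  mds_solution F y eta1 eta2 xs ->
  norm1 (xs - xhat) <= 4 * k%:R * eta2 /\
  norm2 (xs - xhat) <= 6 * sqrtC (k%:R) * eta2.
Proof.
move=> F_unitary xhat_sparse y_def e_eta1 Fe_eta2 [xs_feasible xs_min].
set h := xs - xhat; set S := [set i | xhat i 0 != 0].
have eta2_ge0 : 0 <= eta2 := le_trans (norminf_ge0 _) Fe_eta2.
have h_inf : norminf h <= 2 * eta2.
  exact: mds_feasible_error_norminf y_def xs F_unitary Fe_eta2 xs_feasible.
have cone : \sum_(i | i \notin S) `|h i 0| <= \sum_(i in S) `|h i 0|.
  apply: (l1_cone _ xhat) => [i|]; first by rewrite inE negbK => /eqP.
  rewrite /h addrC subrK; apply: xs_min.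
  exact: mds_feasible_signal y_def e_eta1 Fe_eta2.
have h_l1 : norm1 h <= 4 * k%:R * eta2.
  have -> : 4 * k%:R * eta2 = 2 * k%:R * (2 * eta2) by ring.
  apply: le_trans (norm1_le_cone _ _ cone) _.
  by rewrite ler_pM ?mulr_ge0 ?ler0n ?norminf_ge0 // ler_wpM2l ?ler_nat.
split=> //.
rewrite -(ler_pXn2r (n := 2)) ?nnegrE ?norm2_ge0 ?mulr_ge0 ?sqrtC_ge0 ?ler0n //.
apply: le_trans (norm2_sqr_le h) _.
apply: le_trans (ler_pM (norm1_ge0 h) (norminf_ge0 h) h_l1 h_inf) _.
rewrite !exprMn sqrtCK -subr_ge0.
have -> : 6 ^+ 2 * k%:R * eta2 ^+ 2 - 4 * k%:R * eta2 * (2 * eta2)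
          = 28 * k%:R * eta2 ^+ 2 by ring.
by rewrite !mulr_ge0 ?ler0n ?exprn_ge0.
Qed.
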